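(* Let $(F_S,\iota)$ be an embedded local étale algebra and let $\Gamma\subseteq\mathrm{PGL}_2(F_S)$ be a subgroup whose set of limit points $\mathcal L^S_\Gamma\subseteq\mathbb P^1(\mathbf C_S)$ is empty. Then $\Gamma$ is finite.
   Context: Fix a prime $p$ and let $\mathbf{C}$ be the completion of an algebraic closure of $\mathbb{Q}_p$ or of $\mathbb{F}_p((T))$. An embedded local étale algebra $(F_S,\iota)$ consists of a finite non-empty set $S$, non-Archimedean local fields $F_\mathfrak p$ ($\mathfrak p\in S$) of residue characteristic $p$ and of the same characteristic as $\mathbf C$, and field embeddings $\iota_\mathfrak p\colon F_\mathfrak p\hookrightarrow\mathbf C$; $F_S=\prod_\mathfrak pF_\mathfrak p$. The group $\mathrm{PGL}_2(F_S)=\prod_\mathfrak p\mathrm{PGL}_2(F_\mathfrak p)$ acts componentwise via $\iota$ by Möbius transformations on $\mathbb P^1(\mathbf C_S):=\prod_{\mathfrak p\in S}\mathbb P^1(\mathbf C)$ (product topology). For a subgroup $\Gamma\subseteq\mathrm{PGL}_2(F_S)$, $\mathcal L^S_\Gamma$ is the set of $x\in\mathbb P^1(\mathbf C_S)$ such that there exist $y\in\mathbb P^1(\mathbf C_S)$ and pairwise distinct elements $\gamma_j\in\Gamma$ ($j\ge1$) with $\gamma_j(y)\to x$. *)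

From HB Require Import structures.
From mathcomp Require Import all_boot all_order all_algebra.
From mathcomp Require Import reals.
Set Implicit Arguments.
Unset Strict Implicit.
Unset Printing Implicit Defensive.
Import Order.TTheory GRing.Theory Num.Theory.
Local Open Scope ring_scope.

Section ValuedField.
Variables (R : realType) (C : fieldType) (abs : C -> R).

Definition nonarch_abs : Prop :=
  [/\ (forall x, 0 <= abs x),
      (forall x, abs x = 0 <-> x = 0),
      (forall x y, abs (x * y) = abs x * abs y) &
      (forall x y, abs (x + y) <= Num.max (abs x) (abs y))].

Definition abs_cvg (u : nat -> C) (l : C) : Prop :=
  forall e : R, 0 < e -> exists N, forall n, (N <= n)%N -> abs (u n - l) < e.

Definition abs_cauchy (u : nat -> C) : Prop :=
  forall e : R, 0 < e -> exists N, forall m n, (N <= m)%N -> (N <= n)%N ->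
    abs (u m - u n) < e.

Definition abs_complete : Prop :=
  forall u, abs_cauchy u -> exists l, abs_cvg u l.

Definition is_subfield (K : C -> Prop) : Prop :=
  [/\ K 0, K 1,
      (forall x y, K x -> K y -> K (x - y)),
      (forall x y, K x -> K y -> K (x * y)) &
      (forall x, K x -> x != 0 -> K x^-1)].

Definition nondiscrete (K : C -> Prop) : Prop :=
  exists x, K x /\ 0 < abs x < 1.

Definition locally_compact (K : C -> Prop) : Prop :=
  exists r : R, 0 < r /\
    forall u : nat -> C, (forall n, K (u n) /\ abs (u n) <= r) ->
      exists (phi : nat -> nat) (l : C),
        [/\ (forall n, (phi n < phi n.+1)%N), K l & abs_cvg (u \o phi) l].

(* K is (the image under a continuous field embedding of) a
   non-Archimedean local field: a locally compact, non-discrete subfield *)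
Definition local_subfield (K : C -> Prop) : Prop :=
  [/\ is_subfield K, nondiscrete K & locally_compact K].

Definition algebraic_over (K : C -> Prop) (x : C) : Prop :=
  exists q : {poly C}, [/\ q != 0, (forall i, K q`_i) & root q x].

Definition abs_dense (D : C -> Prop) : Prop :=
  forall (x : C) (e : R), 0 < e -> exists y, D y /\ abs (x - y) < e.

(* (C, abs) is the completion of an algebraic closure of a non-Archimedean
   local field of residue characteristic p (equivalently of Q_p or F_p((T))) *)
Definition completed_alg_closure (p : nat) : Prop :=
  [/\ nonarch_abs, abs_complete, abs p%:R < 1 &
      exists K0, local_subfield K0 /\ abs_dense (algebraic_over K0)].

(* P^1(C) = C u {oo}, with oo = None, and the chordal metric *)
Definition chordal (z w : option C) : R :=
  match z, w with
  | Some x, Some y => abs (x - y) / (Num.max 1 (abs x) * Num.max 1 (abs y))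
  | Some x, None | None, Some x => (Num.max 1 (abs x))^-1
  | None, None => 0
  end.

Definition mobius (A : 'M[C]_2) (z : option C) : option C :=
  let a := A ord0 ord0 in let b := A ord0 ord_max in
  let c := A ord_max ord0 in let d := A ord_max ord_max in
  match z with
  | Some x => if c * x + d == 0 then None else Some ((a * x + b) / (c * x + d))
  | None => if c == 0 then None else Some (a / c)
  end.

Section PGL.
Variables (S : finType) (K : S -> C -> Prop).

(* elements of GL_2(F_S), viewed in GL_2(C)^S via iota *)
Definition inGL (g : S -> 'M[C]_2) : Prop :=
  forall s, (forall i j, K s (g s i j)) /\ \det (g s) != 0.

(* equality in PGL_2(F_S) = GL_2(F_S) / F_S^x *)
Definition proj_eq (g h : S -> 'M[C]_2) : Prop :=
  forall s, exists c, [/\ K s c, c != 0 & h s = c *: g s].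

Definition scalar_tuple (g : S -> 'M[C]_2) : Prop :=
  forall s, exists c, [/\ K s c, c != 0 & g s = c%:M].

(* G is the full preimage in GL_2(F_S) of a subgroup Gamma of PGL_2(F_S),
   i.e. a subgroup of GL_2(F_S) containing the centre F_S^x *)
Definition pgl_subgroup (G : (S -> 'M[C]_2) -> Prop) : Prop :=
  [/\ (forall g, G g -> inGL g),
      (forall g, scalar_tuple g -> G g),
      (forall g h, G g -> G h -> G (fun s => g s *m h s)) &
      (forall g, G g -> G (fun s => invmx (g s)))].

Definition limit_point (G : (S -> 'M[C]_2) -> Prop) (x : S -> option C) : Prop :=
  exists (y : S -> option C) (gam : nat -> S -> 'M[C]_2),
    [/\ (forall j, G (gam j)),
        (forall i j, i <> j -> ~ proj_eq (gam i) (gam j)) &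
        (forall s (e : R), 0 < e -> exists N, forall j, (N <= j)%N ->
            chordal (mobius (gam j s) (y s)) (x s) < e)].

Definition pgl_finite (G : (S -> 'M[C]_2) -> Prop) : Prop :=
  exists (n : nat) (f : nat -> S -> 'M[C]_2),
    forall g, G g -> exists i, (i < n)%N /\ proj_eq g (f i).

End PGL.
End ValuedField.

(* If Gamma were infinite, choose pairwise distinct gamma_j in Gamma.  The points
   gamma_j(oo) lie in the product of the P^1(F_p), which is sequentially compact:
   since F_p is locally compact, a sequence in its unit disk, rescaled by a
   power of some pi with 0 < |pi| < 1, lands in a compact ball, and z |-> 1/z,
   an isometry of the chordal metric, maps the rest of P^1(F_p) into the disk.
   Extracting coordinatewise, a subsequence of gamma_j(oo) converges, and its
   limit lies in L_Gamma, which was assumed empty. *)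

From HB Require Import structures.
From mathcomp Require Import all_boot all_order all_algebra.
From mathcomp Require Import reals ring lra.
From Stdlib Require Import Classical ClassicalEpsilon.
Import Order.TTheory GRing.Theory Num.Theory.
Set Implicit Arguments.
Unset Strict Implicit.
Unset Printing Implicit Defensive.
Local Open Scope ring_scope.

Lemma bernoulli_ineq (R : realDomainType) (t : R) n :
  0 <= t -> 1 + t *+ n <= (1 + t) ^+ n.
Proof.
move=> t_ge0; elim: n => [|n IHn]; first by rewrite expr0 mulr0n addr0.
have tn_ge0 : 0 <= t * t *+ n by rewrite mulrn_wge0 // mulr_ge0.
have := ler_wpM2l (addr_ge0 ler01 t_ge0) IHn.
rewrite exprS mulrS mulrDr mulr1 mulrDl mul1r mulrnAr; lra.
Qed.

Lemma exists_expr_le (R : archiRealFieldType) (q r : R) :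
  0 <= q -> q < 1 -> 0 < r -> exists k, q ^+ k <= r.
Proof.
move=> q_ge0 q_lt1 r_gt0.
have [->|q_neq0] := eqVneq q 0; first by exists 1%N; rewrite expr1 ltW.
have q_gt0 : 0 < q by rewrite lt_def q_neq0.
pose t := q^-1 - 1.
have t_gt0 : 0 < t by rewrite subr_gt0 invf_gt1.
have rt_ge0 : 0 <= (r * t)^-1 by rewrite invr_ge0 ltW // mulr_gt0.
exists (Num.bound (r * t)^-1).
set k := Num.bound _; have k_gt := archi_boundP rt_ge0.
have tk_gt : r^-1 < t * k%:R.
  have -> : r^-1 = t * (r * t)^-1 by field; rewrite ?gt_eqF.
  by rewrite ltr_pM2l.
have qk_gt0 : 0 < q ^+ k by rewrite exprn_gt0.
rewrite -lef_pV2 ?posrE // -exprVn.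
have -> : q^-1 = 1 + t by rewrite /t addrC subrK.
apply: le_trans (bernoulli_ineq k (ltW t_gt0)).
by rewrite -mulr_natr ltW // ltr_wpDl.
Qed.

Definition frequently (P : nat -> Prop) := forall N, exists2 n, (N <= n)%N & P n.

Lemma frequently_or_not (P : nat -> Prop) : frequently P \/ frequently (fun n => ~ P n).
Proof.
have [|notP] := classic (frequently P); [by left | right] => N.
have [M PM] : exists M, forall n, (M <= n)%N -> ~ P n.
  apply: NNPP => hP; apply: notP => M; apply: NNPP => hM.
  by apply: hP; exists M => n Mn Pn; apply: hM; exists n.
by exists (maxn N M); rewrite ?leq_maxl //; apply: PM; rewrite leq_maxr.
Qed.

Lemma homo_ltn_infl (phi : nat -> nat) :
  {homo phi : m n / (m < n)%N} -> forall n, (n <= phi n)%N.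
Proof. by move=> phi_incr; elim=> // n IHn; exact: leq_ltn_trans IHn (phi_incr _ _ _). Qed.

Lemma frequently_subseq (P : nat -> Prop) : frequently P ->
  exists2 phi : nat -> nat, {homo phi : m n / (m < n)%N} & forall n, P (phi n).
Proof.
move=> freqP.
have [f f_spec] : exists f, forall N, (N <= f N)%N /\ P (f N).
  by apply: (choice (fun N n => (N <= n)%N /\ P n)) => N; have [n] := freqP N; exists n.
pose phi n := iter n (fun m => f m.+1) (f 0%N).
have phiS n : (phi n < phi n.+1)%N by case: (f_spec (phi n).+1).
exists phi; first exact: homo_ltn ltn_trans phiS.
by case=> [|n]; [case: (f_spec 0%N) | case: (f_spec (phi n).+1)].
Qed.

Section AbsoluteValue.
Variables (R : realType) (C : fieldType) (abs : C -> R).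
Hypothesis abs_nonarch : nonarch_abs abs.

Lemma abs_ge0 x : 0 <= abs x. Proof. by case: abs_nonarch. Qed.
Lemma abs_eq0 x : abs x = 0 <-> x = 0. Proof. by case: abs_nonarch. Qed.
Lemma absM x y : abs (x * y) = abs x * abs y. Proof. by case: abs_nonarch. Qed.

Lemma abs0 : abs 0 = 0. Proof. exact/abs_eq0. Qed.

Lemma abs_gt0 x : (0 < abs x) = (x != 0).
Proof. by rewrite lt_def abs_ge0 andbT; congr negb; apply/eqP/eqP => /abs_eq0. Qed.

Lemma abs1 : abs 1 = 1.
Proof.
have abs1_gt0 : 0 < abs 1 by rewrite abs_gt0 oner_eq0.
by apply: (mulfI (lt0r_neq0 abs1_gt0)); rewrite -absM !mulr1.
Qed.

Lemma absV x : abs x^-1 = (abs x)^-1.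
Proof.
have [->|x_neq0] := eqVneq x 0; first by rewrite invr0 abs0 invr0.
have ax_gt0 : 0 < abs x by rewrite abs_gt0.
by apply: (mulfI (lt0r_neq0 ax_gt0)); rewrite -absM !mulfV ?abs1 ?gt_eqF.
Qed.

Lemma absN x : abs (- x) = abs x.
Proof.
have absN1 : abs (-1) = 1.
  have := abs_ge0 (-1); have : abs (-1) * abs (-1) = 1 by rewrite -absM mulrNN mulr1 abs1.
  nra.
by rewrite -mulN1r absM absN1 mul1r.
Qed.

Lemma abs_distC x y : abs (x - y) = abs (y - x).
Proof. by rewrite -opprB absN. Qed.

Lemma absX x k : abs (x ^+ k) = abs x ^+ k.
Proof. by elim: k => [|k IHk]; rewrite ?expr0 ?abs1 // !exprS absM IHk. Qed.

Lemma chordal_le_abs x y : chordal abs (Some x) (Some y) <= abs (x - y).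
Proof.
have den_ge1 : 1 <= Num.max 1 (abs x) * Num.max 1 (abs y) by rewrite mulr_ege1 ?le_max ?lexx.
by rewrite /= ler_pdivrMr ?(lt_le_trans ltr01) // ler_peMr ?abs_ge0.
Qed.

Definition P1_inv (z : option C) : option C :=
  match z with
  | None => Some 0
  | Some x => if x == 0 then None else Some x^-1
  end.

Lemma P1_invK : involutive P1_inv.
Proof.
case=> [x|] /=; last by rewrite eqxx.
by have [->|x_neq0] := eqVneq x 0; rewrite /= ?eqxx ?invr_eq0 ?(negPf x_neq0) ?invrK.
Qed.

Lemma max1_absV x : x != 0 -> Num.max 1 (abs x^-1) = Num.max 1 (abs x) / abs x.
Proof.
move=> x_neq0; have ax_gt0 : 0 < abs x by rewrite abs_gt0.
rewrite absV.
have [ax_le1|ax_gt1] := leP (abs x) 1.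
  by rewrite mul1r max_r // invf_ge1.
by rewrite mulfV ?gt_eqF // max_l // invf_le1 ?ltW.
Qed.

Lemma chordalC z w : chordal abs z w = chordal abs w z.
Proof.
by case: z => [x|]; case: w => [y|] //=; rewrite abs_distC [X in _ / X]mulrC.
Qed.

Lemma chordal_P1_inv z w : chordal abs (P1_inv z) (P1_inv w) = chordal abs z w.
Proof.
have max10 : Num.max 1 (abs 0) = 1 by rewrite abs0 max_l ?ler01.
have inv_zero x : x != 0 -> chordal abs (Some x^-1) None = chordal abs (Some x) (Some 0).
  by move=> x_neq0 /=; rewrite max1_absV // max10 subr0 mulr1 invf_div mulrC.
have inv_inf x : x != 0 -> chordal abs (Some x^-1) (Some 0) = chordal abs (Some x) None.
  by move=> x_neq0; rewrite -[in RHS](invrK x) inv_zero ?invr_eq0.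
case: z => [x|]; case: w => [y|]; rewrite /P1_inv; last by rewrite /= subr0 abs0 mul0r.
- have [->|x_neq0] := eqVneq x 0; have [->|y_neq0] := eqVneq y 0.
  + by rewrite /= subr0 abs0 mul0r.
  + by rewrite chordalC inv_zero // chordalC.
  + exact: inv_zero.
  rewrite /=; have -> : x^-1 - y^-1 = (x - y) * - (x * y)^-1.
    by field; rewrite x_neq0 y_neq0.
  have max1_neq0 a : Num.max 1 (abs a) != 0 by rewrite gt_eqF // lt_max ltr01.
  rewrite (max1_absV x_neq0) (max1_absV y_neq0) absM absN absV absM.
  by field; rewrite ?max1_neq0 ?gt_eqF ?abs_gt0.
- by have [->|x_neq0] := eqVneq x 0; [rewrite chordalC | exact: inv_inf].
by have [->|y_neq0] := eqVneq y 0; [rewrite chordalC | rewrite chordalC inv_inf // chordalC].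
Qed.

Definition chordal_cvg (u : nat -> option C) (x : option C) : Prop :=
  forall e : R, 0 < e -> exists N, forall n, (N <= n)%N -> chordal abs (u n) x < e.

Lemma chordal_cvg_subseq u x (phi : nat -> nat) :
  {homo phi : m n / (m < n)%N} -> chordal_cvg u x -> chordal_cvg (u \o phi) x.
Proof.
move=> phi_incr u_cvg e e_gt0; have [N uN] := u_cvg e e_gt0.
by exists N => n Nn; apply: uN; exact: leq_trans Nn (homo_ltn_infl phi_incr n).
Qed.

Lemma chordal_cvg_P1_inv u x : chordal_cvg u x -> chordal_cvg (P1_inv \o u) (P1_inv x).
Proof. by move=> u_cvg e /u_cvg [N uN]; exists N => n /uN; rewrite /= chordal_P1_inv. Qed.

Lemma abs_cvg_chordal u l : abs_cvg abs u l -> chordal_cvg (Some \o u) (Some l).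
Proof.
by move=> u_cvg e /u_cvg [N uN]; exists N => n /uN; exact: le_lt_trans (chordal_le_abs _ _).
Qed.

Definition seq_compact (P : option C -> Prop) : Prop :=
  forall z : nat -> option C, (forall n, P (z n)) ->
    exists2 phi : nat -> nat, {homo phi : m n / (m < n)%N} &
      exists x, chordal_cvg (z \o phi) x.

Definition P1_over (K : C -> Prop) (z : option C) : Prop :=
  if z is Some x then K x else True.

Section LocalSubfield.
Variable K : C -> Prop.
Hypothesis K_local : local_subfield abs K.

Lemma local_subfield_disk_compact (u : nat -> C) : (forall n, K (u n) /\ abs (u n) <= 1) ->
  exists2 phi : nat -> nat, {homo phi : m n / (m < n)%N} & exists l, abs_cvg abs (u \o phi) l.
Proof.
move=> u_disk.
case: K_local => [[_ K1 _ KM _] [pi [Kpi /andP [pi_gt0 pi_lt1]]] [r [r_gt0 ball_compact]]].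
have [k pik_le] := exists_expr_le (ltW pi_gt0) pi_lt1 r_gt0.
have pik_neq0 : pi ^+ k != 0.
  by rewrite expf_neq0 //; apply: contraTneq pi_gt0 => ->; rewrite abs0 ltxx.
have pik_gt0 : 0 < abs (pi ^+ k) by rewrite abs_gt0.
have Kpik : K (pi ^+ k).
  by elim: k {pik_le pik_neq0 pik_gt0} => [|k IHk]; rewrite ?expr0 // exprS; apply: KM.
have v_ball n : K (pi ^+ k * u n) /\ abs (pi ^+ k * u n) <= r.
  have [Ku u_le1] := u_disk n; split; first exact: KM.
  by rewrite absM absX (le_trans _ pik_le) // ler_piMr ?exprn_ge0 ?abs_ge0.
have [phi [l [phiS _ v_cvg]]] := ball_compact _ v_ball.
exists phi; first exact: homo_ltn ltn_trans phiS.
exists (l / pi ^+ k) => e e_gt0.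
have [N vN] := v_cvg _ (mulr_gt0 e_gt0 pik_gt0); exists N => n /vN /=.
have -> : pi ^+ k * u (phi n) - l = pi ^+ k * (u (phi n) - l / pi ^+ k) by field.
by rewrite absM mulrC ltr_pM2r.
Qed.

Definition unit_disk (z : option C) : Prop := exists x, [/\ K x, abs x <= 1 & z = Some x].

Lemma unit_disk_seq_compact : seq_compact unit_disk.
Proof.
move=> z z_disk; pose u n := odflt 0 (z n).
have zE n : z n = Some (u n) by rewrite /u; have [x [_ _ ->]] := z_disk n.
have [phi phi_incr [l u_cvg]] : exists2 phi : nat -> nat, {homo phi : m n / (m < n)%N} &
    exists l, abs_cvg abs (u \o phi) l.
  apply: local_subfield_disk_compact => n.
  by have [x [Kx x_le1 zn]] := z_disk n; rewrite /u zn.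
exists phi => //; exists (Some l) => e /(abs_cvg_chordal u_cvg) [N uN].
by exists N => n /uN; rewrite /= zE.
Qed.

Lemma P1_inv_unit_disk z : P1_over K z -> ~ unit_disk z -> unit_disk (P1_inv z).
Proof.
case: K_local => [[K0 _ _ _ KV] _ _].
case: z => [x|] /= Kx x_out; last by exists 0; rewrite abs0 ler01.
have x_gt1 : 1 < abs x by rewrite ltNge; apply: contra_notN x_out => x_le1; exists x.
have x_neq0 : x != 0 by rewrite -abs_gt0 (lt_trans ltr01).
exists x^-1; rewrite /= (negPf x_neq0); split => //; first exact: KV.
by rewrite absV invf_le1 ?ltW // (lt_trans ltr01).
Qed.

Lemma P1_seq_compact : seq_compact (P1_over K).
Proof.
move=> z zP1.
have [/frequently_subseq [phi phi_incr z_disk] | /frequently_subseq [phi phi_incr z_out]] :=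
  frequently_or_not (fun n => unit_disk (z n)).
  have [psi psi_incr [x zx]] := unit_disk_seq_compact z_disk.
  by exists (phi \o psi); [move=> m n /psi_incr /phi_incr | exists x].
have [psi psi_incr [x zx]] :=
  unit_disk_seq_compact (fun n => P1_inv_unit_disk (zP1 _) (z_out n)).
exists (phi \o psi); first by move=> m n /psi_incr /phi_incr.
exists (P1_inv x) => e /(chordal_cvg_P1_inv zx) [N zN].
by exists N => n /zN; rewrite /= P1_invK.
Qed.
End LocalSubfield.

Lemma seq_compact_prod (S : finType) (P : S -> option C -> Prop) :
  (forall s, seq_compact (P s)) ->
  forall z : nat -> S -> option C, (forall n s, P s (z n s)) ->
  exists2 phi : nat -> nat, {homo phi : m n / (m < n)%N} &
    exists x : S -> option C, forall s, chordal_cvg (fun n => z (phi n) s) (x s).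
Proof.
move=> P_compact z zP.
suff [phi phi_incr [x zx]] : exists2 phi : nat -> nat, {homo phi : m n / (m < n)%N} &
    exists x : S -> option C,
      forall s, s \in enum S -> chordal_cvg (fun n => z (phi n) s) (x s).
  by exists phi => //; exists x => s; apply: zx; rewrite mem_enum.
elim: (enum S) => [|s l [phi phi_incr [x zx]]].
  by exists id => //; exists (fun _ => None).
have [psi psi_incr [xs zxs]] := P_compact s (fun n => z (phi n) s) (fun n => zP _ _).
exists (phi \o psi); first by move=> m n /psi_incr /phi_incr.
exists (fun t => if t == s then xs else x t) => t; rewrite inE.
case: eqP => [-> _ | _ /= t_l]; first exact: zxs.
exact: chordal_cvg_subseq psi_incr (zx t t_l).
Qed.
End AbsoluteValue.

Section Subfield.
Variables (C : fieldType) (K : C -> Prop).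
Hypothesis K_subfield : is_subfield K.

Lemma subfieldN x : K x -> K (- x).
Proof. by case: K_subfield => K0 _ KB _ _ /(KB 0); rewrite sub0r; apply. Qed.

Lemma subfieldD x y : K x -> K y -> K (x + y).
Proof. by case: K_subfield => _ _ KB _ _ Kx /subfieldN /(KB _ _ Kx); rewrite opprK. Qed.

Lemma subfield_div x y : K x -> K y -> K (x / y).
Proof.
case: K_subfield => K0 _ _ KM KV Kx Ky.
by have [->|y_neq0] := eqVneq y 0; [rewrite invr0 mulr0 | apply: KM (KV _ Ky y_neq0)].
Qed.

Lemma mobius_P1_over (A : 'M[C]_2) z :
  (forall i j, K (A i j)) -> P1_over K z -> P1_over K (mobius A z).
Proof.
case: K_subfield => _ _ _ KM _ KA; case: z => [x|] /= Kx.
  by case: eqP => //= _; apply: subfield_div; apply: subfieldD => //; apply: KM.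
by case: eqP => //= _; apply: subfield_div.
Qed.
End Subfield.

Lemma proj_eq_sym (C : fieldType) (S : finType) (K : S -> C -> Prop) :
  (forall s, is_subfield (K s)) -> forall g h, proj_eq K g h -> proj_eq K h g.
Proof.
move=> K_subfield g h gh s; have [c [Kc c_neq0 ->]] := gh s.
have [_ _ _ _ KV] := K_subfield s.
by exists c^-1; split; [exact: KV | rewrite invr_eq0 | rewrite scalerA mulVf ?scale1r].
Qed.

Lemma not_finitely_covered_seq (T : Type) (t0 : T) (Q : T -> Prop) (E : T -> T -> Prop) :
  (forall x y, E x y -> E y x) ->
  ~ (exists n (f : nat -> T), forall x, Q x -> exists i, (i < n)%N /\ E x (f i)) ->
  exists2 u : nat -> T, (forall n, Q (u n)) & forall i j, i <> j -> ~ E (u i) (u j).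
Proof.
move=> E_sym not_covered.
have avoid n (f : nat -> T) : exists x, Q x /\ forall i, (i < n)%N -> ~ E x (f i).
  apply: NNPP => no_x; apply: not_covered; exists n, f => x Qx.
  by apply: NNPP => no_i; apply: no_x; exists x; split=> // i i_lt Exf; apply: no_i; exists i.
have [next next_spec] := choice _ (fun nf : nat * (nat -> T) => avoid nf.1 nf.2).
pose F n := iteri n (fun k f i => if i == k then next (k, f) else f i) (fun _ => t0).
pose u n := next (n, F n).
have FE m i : (i < m)%N -> F m i = u i.
  elim: m => // m IHm; rewrite ltnS leq_eqVlt /= => /predU1P [->|i_lt]; first by rewrite eqxx.
  by rewrite (ltn_eqF i_lt) IHm.
have u_new j i : (i < j)%N -> ~ E (u j) (u i).
  by move=> i_lt; rewrite -(FE j i i_lt); have [_] := next_spec (j, F j); apply.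
exists u => [n|i j]; first by case: (next_spec (n, F n)).
move=> i_neq_j; case: (ltngtP i j) => [i_lt|j_lt|] //; last exact: u_new.
by move/E_sym; exact: u_new.
Qed.

Theorem proposition2p3 (p : nat) (R : realType) (C : closedFieldType)
  (abs : C -> R) (S : finType) (K : S -> C -> Prop)
  (G : (S -> 'M[C]_2) -> Prop) :
  prime p ->
  completed_alg_closure abs p ->
  (0 < #|S|)%N ->
  (forall s, local_subfield abs (K s)) ->
  pgl_subgroup K G ->
  (forall x : S -> option C, ~ limit_point abs K G x) ->
  pgl_finite K G.
Proof.
move=> _ [abs_nonarch _ _ _] _ K_local [G_GL _ _ _] no_limit_point.
have K_subfield s : is_subfield (K s) by case: (K_local s).
apply: NNPP => G_infinite.
have [gam G_gam gam_neq] :=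
  not_finitely_covered_seq (fun _ => 0) (proj_eq_sym K_subfield) G_infinite.
have orbit_P1 n s : P1_over (K s) (mobius (gam n s) None).
  by apply: mobius_P1_over => //; have [] := G_GL _ (G_gam n) s.
have [phi phi_incr [x gam_x]] :=
  seq_compact_prod (fun s => P1_seq_compact abs_nonarch (K_local s)) orbit_P1.
apply: (no_limit_point x); exists (fun _ => None), (gam \o phi).
split=> [j | i j i_neq_j | s]; [exact: G_gam | | exact: gam_x].
by apply: gam_neq => /(incn_inj (leq_mono phi_incr)).
Qed.
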